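(* Let $\rho : G \to \mathrm{O}(V)$ be an orthogonal representation of a compact Lie group $G$ on a finite dimensional real Euclidean vector space $(V,\langle\cdot\mid\cdot\rangle)$ with $V^G=\{0\}$. Let $\sigma_1,\ldots,\sigma_n$ be homogeneous generators of $\mathbb{R}[V]^G$ of positive degrees $d_1,\ldots,d_n$, with $\sigma_1(v)=\langle v\mid v\rangle$, and let $\sigma=(\sigma_1,\ldots,\sigma_n)$. Let $\mathcal{C}$ be a class of $C^\infty$-functions as in the context, let $U \subseteq \mathbb{R}^q$ be an open neighborhood of $0$, and let $f=(f_1,\ldots,f_n) : U \to \sigma(V) \subseteq \mathbb{R}^n$ be a $\mathcal{C}$-mapping. Assume that $f_1$ is not identically zero and that, for every $j$ with $f_j$ not identically zero, $f_j(x) = x^{\alpha_j} g_j(x)$ on $U$ for some non-vanishing $g_j \in \mathcal{C}(U,\mathbb{R})$ and some $\alpha_j \in \mathbb{N}^q$. Then there exists $\delta \in \mathbb{N}^q$ such that $\alpha_1 = 2\delta$ and $\alpha_j \ge d_j\delta$ (componentwise) for all $j$ with $f_j$ not identically zero.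
   Context: The class $\mathcal{C}$: for every open $U \subseteq \mathbb{R}^q$ ($q\in\mathbb{N}$) a subalgebra $\mathcal{C}(U)\subseteq C^\infty(U,\mathbb{R})$ containing the real analytic functions and closed under composition, partial derivatives, division by a coordinate (a function vanishing on $\{x_i=a_i\}$ equals $(x_i-a_i)h$ with $h\in\mathcal{C}$), and taking local inverses of mappings with invertible Jacobian, and quasianalytic (a function with vanishing Taylor series at a point vanishes near that point). For $x\in\mathbb{R}^q$, $\alpha\in\mathbb{N}^q$, $x^\alpha = x_1^{\alpha_1}\cdots x_q^{\alpha_q}$. *)

From HB Require Import structures.
From mathcomp Require Import all_boot all_order all_algebra.
From mathcomp Require Import all_classical all_reals all_analysis.
From mathcomp Require mpoly.

Set Implicit Arguments.
Unset Strict Implicit.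
Unset Printing Implicit Defensive.

Import Order.TTheory GRing.Theory Num.Theory.
Import numFieldNormedType.Exports.
Local Open Scope ring_scope.
Local Open Scope classical_set_scope.

Definition ebasis (R : realType) (q : nat) (i : 'I_q) : 'rV[R]_q :=
  delta_mx 0 i.

Definition partial (R : realType) (q : nat) (i : 'I_q) (f : 'rV[R]_q -> R)
  : 'rV[R]_q -> R := fun x => derive f x (ebasis R i).

Definition dpart (R : realType) (q : nat) (l : seq 'I_q) (f : 'rV[R]_q -> R)
  : 'rV[R]_q -> R := foldr (@partial R q) f l.

Definition smooth_on (R : realType) (q : nat) (U : set 'rV[R]_q)
  (f : 'rV[R]_q -> R) : Prop :=
  forall (l : seq 'I_q) (x : 'rV[R]_q), U x ->
    (forall i : 'I_q, derivable (dpart l f) x (ebasis R i)) /\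
    {for x, continuous (dpart l f)}.

Definition monom (R : realType) (q : nat) (alpha : 'I_q -> nat)
  (x : 'rV[R]_q) : R := \prod_(i < q) (x 0 i) ^+ (alpha i).

Definition ps_partial (R : realType) (q : nat) (c : ('I_q -> nat) -> R)
  (a x : 'rV[R]_q) (N : nat) : R :=
  \sum_(al : {ffun 'I_q -> 'I_N.+1} | (\sum_(i < q) (al i : nat) <= N)%N)
     c (fun i => (al i : nat)) * monom (fun i => (al i : nat)) (x - a).
Definition ps_abs_partial (R : realType) (q : nat) (c : ('I_q -> nat) -> R)
  (a x : 'rV[R]_q) (N : nat) : R :=
  \sum_(al : {ffun 'I_q -> 'I_N.+1} | (\sum_(i < q) (al i : nat) <= N)%N)
     `|c (fun i => (al i : nat)) * monom (fun i => (al i : nat)) (x - a)|.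

Definition analytic_on (R : realType) (q : nat) (U : set 'rV[R]_q)
  (f : 'rV[R]_q -> R) : Prop :=
  forall a, U a -> exists r : R, 0 < r /\ exists c : ('I_q -> nat) -> R,
    forall x, ball a r x ->
      (exists M : R, forall N, ps_abs_partial c a x N <= M) /\
      (fun N => ps_partial c a x N) @ \oo --> f x.

Definition vecf (R : realType) (q p : nat) (F : 'I_p -> 'rV[R]_q -> R)
  (x : 'rV[R]_q) : 'rV[R]_p := \row_(k < p) F k x.

Definition jacobian (R : realType) (q : nat) (F : 'I_q -> 'rV[R]_q -> R)
  (a : 'rV[R]_q) : 'M[R]_q := \matrix_(k < q, i < q) partial i (F k) a.

(* The class C: C q U is the algebra C(U) of functions on the open set
   U of R^q.  (Functions are total on R^q; only their values on U matter.) *)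
Definition Cfamily (R : realType) :=
  forall q : nat, set 'rV[R]_q -> set ('rV[R]_q -> R).

Definition is_C_class (R : realType) (C : Cfamily R) : Prop :=
  (forall q (U : set 'rV[R]_q) f g, open U -> C q U f ->
     (forall x, U x -> f x = g x) -> C q U g) /\
  (forall q (U : set 'rV[R]_q) f, open U -> C q U f -> smooth_on U f) /\
  (forall q (U : set 'rV[R]_q) f g, open U -> C q U f -> C q U g ->
     C q U (fun x => f x + g x) /\ C q U (fun x => f x * g x)) /\
  (forall q (U : set 'rV[R]_q) (r : R), open U -> C q U (fun _ => r)) /\
  (forall q (U : set 'rV[R]_q) f, open U -> analytic_on U f -> C q U f) /\
  (forall q p (U : set 'rV[R]_q) (W : set 'rV[R]_p)
          (F : 'I_p -> 'rV[R]_q -> R) (g : 'rV[R]_p -> R),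
     open U -> open W -> (forall k, C q U (F k)) ->
     (forall x, U x -> W (vecf F x)) -> C p W g ->
     C q U (fun x => g (vecf F x))) /\
  (forall q (U : set 'rV[R]_q) f (i : 'I_q), open U -> C q U f ->
     C q U (partial i f)) /\
  (forall q (U : set 'rV[R]_q) f (i : 'I_q) (a : R), open U -> C q U f ->
     (forall x, U x -> x 0 i = a -> f x = 0) ->
     exists h, C q U h /\ forall x, U x -> f x = (x 0 i - a) * h x) /\
  (forall q (U : set 'rV[R]_q) (F : 'I_q -> 'rV[R]_q -> R) (a : 'rV[R]_q),
     open U -> (forall k, C q U (F k)) -> U a ->
     \det (jacobian F a) != 0 ->
     exists (U0 W0 : set 'rV[R]_q) (G : 'I_q -> 'rV[R]_q -> R),
       [/\ (open U0 /\ U0 `<=` U /\ U0 a), (open W0 /\ W0 (vecf F a)),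
           (forall k, C q W0 (G k)),
           (forall x, U0 x -> W0 (vecf F x) /\ vecf G (vecf F x) = x) &
           (forall y, W0 y -> U0 (vecf G y) /\ vecf F (vecf G y) = y)]) /\
  (* quasianalyticity *)
  (forall q (U : set 'rV[R]_q) f a, open U -> C q U f -> U a ->
     (forall l : seq 'I_q, dpart l f a = 0) ->
     \forall x \near a, f x = 0).

(* G is a compact subgroup of O(m), acting on row vectors by v |-> v *m A. *)
Definition compact_orth_group (R : realType) (m : nat) (G : set 'M[R]_m)
  : Prop :=
  [/\ G 1%:M,
      (forall A B, G A -> G B -> G (A *m B)),
      (forall A, G A -> G (invmx A)),
      (forall A, G A -> A *m A^T = 1%:M) &
      compact G].

Definition peval (R : realType) (m : nat) (p : mpoly.mpoly m R)
  (v : 'rV[R]_m) : R := mpoly.meval (fun i => v 0 i) p.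

Definition invariant_poly (R : realType) (m : nat) (G : set 'M[R]_m)
  (p : mpoly.mpoly m R) : Prop :=
  forall A v, G A -> peval p (v *m A) = peval p v.

(* sigma_0,...,sigma_{n-1} (the paper's sigma_1..sigma_n) are homogeneous
   (every monomial in the support has total degree d j; this is the
   unfolding of multinomials' [in R[m], d.-homog])
   generators of R[V]^G of degrees d *)
Definition hom_generators (R : realType) (m n : nat) (G : set 'M[R]_m)
  (sigma : 'I_n -> mpoly.mpoly m R) (d : 'I_n -> nat) : Prop :=
  [/\ (forall j, invariant_poly G (sigma j)),
      (forall j, all [pred mo | mpoly.mdeg mo == d j] (mpoly.msupp (sigma j))) &
      (forall p, invariant_poly G p ->
         exists P : mpoly.mpoly n R,
           p = mpoly.comp_mpoly [tuple sigma j | j < n] P)].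

From HB Require Import structures.
From mathcomp Require Import all_boot all_order all_algebra.
From mathcomp Require Import all_classical all_reals all_analysis.
From mathcomp Require mpoly.
From mathcomp Require Import ring lra.
Import Order.TTheory GRing.Theory Num.Theory.
Import numFieldNormedType.Exports.
Local Open Scope classical_set_scope.
Local Open Scope ring_scope.
Set Implicit Arguments.
Unset Strict Implicit.
Unset Printing Implicit Defensive.

(* Restrict everything to the lines t |-> (c,...,c,t,c,...,c) through points
   near 0.  There a monomial x^a is t^(a_i) times a positive constant, while
   the non-vanishing factors g_j stay bounded away from 0 and infinity and keep
   their sign.  As f_1 = |v|^2 >= 0, the exponent of t in f_1 is even, say
   2 delta_i.  Homogeneity of sigma_j of degree d_j gives
   sigma_j(v)^2 <= K |v|^(2 d_j), i.e. f_j^2 <= K f_1^(d_j), and comparing the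
   powers of t as t -> 0+ yields 2 alpha_j,i >= d_j * 2 delta_i. *)

Lemma even_of_nonneg_pow (R : realDomainType) (k : nat) (c u w : R) :
  0 < c -> 0 < u * w -> 0 <= c ^+ k * u -> 0 <= (- c) ^+ k * w -> ~~ odd k.
Proof.
move=> c0 uw0; rewrite exprNn -signr_odd; case: (odd k) => //.
rewrite expr1 mulN1r mulNr oppr_ge0 pmulr_rge0 ?pmulr_rle0 ?exprn_gt0 //; nra.
Qed.

Lemma leq_of_pow_dominated (R : realFieldType) (n m : nat) (A B c : R) :
  0 < A -> 0 < c -> (forall t, 0 < t <= c -> A * t ^+ n <= B * t ^+ m) ->
  (m <= n)%N.
Proof.
move=> A0 c0 dom; rewrite leqNgt; apply/negP => nm.
set t := Num.min (Num.min c 1) (A / (`|B| + 1)).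
have B1 : 0 < `|B| + 1 by rewrite ltr_wpDl.
have t0 : 0 < t by rewrite !lt_min c0 ltr01 divr_gt0.
have tc : t <= c by rewrite /t !ge_min lexx.
have t1 : t <= 1 by rewrite /t !ge_min lexx orbT.
have tA : t * (`|B| + 1) <= A by rewrite -ler_pdivlMr // /t ge_min lexx orbT.
have tmn : t ^+ m <= t ^+ n * t by rewrite -exprSr (ler_wiXn2l (ltW t0) t1).
have tn0 : 0 < t ^+ n by rewrite exprn_gt0.
have : A * t ^+ n <= `|B| * t * t ^+ n.
  apply: le_trans (dom t _) _; first by rewrite t0 tc.
  apply: le_trans (ler_norm _) _.
  rewrite normrM (ger0_norm (exprn_ge0 _ (ltW t0))).
  by rewrite mulrAC -mulrA ler_wpM2l.
rewrite ler_pM2r //; nra.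
Qed.

Lemma homog_peval_norm_le (R : realType) (m dd : nat) (p : mpoly.mpoly m R)
    (v : 'rV[R]_m) (s : R) :
  all [pred mo | mpoly.mdeg mo == dd] (mpoly.msupp p) ->
  0 <= s -> (forall i, `|v 0 i| <= s) ->
  `|peval p v| <= (\sum_(mo <- mpoly.msupp p) `|mpoly.mcoeff mo p|) * s ^+ dd.
Proof.
move=> homp s0 vs; rewrite /peval mpoly.mevalE.
elim: (mpoly.msupp p) homp => [|mo l IH] /=.
  by rewrite !big_nil normr0 mul0r.
case/andP => /eqP mo_dd /IH {}IH; rewrite !big_cons mulrDl.
apply: le_trans (ler_normD _ _) _; apply: lerD IH.
rewrite normrM ler_wpM2l // normr_prod -mo_dd mpoly.mdegE -prodrXr.
apply: ler_prod => i _; rewrite normrX exprn_ge0 //=.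
by apply: lerXn2r; rewrite ?nnegrE.
Qed.

Lemma homog_peval_sqr_le (R : realType) (m dd : nat) (p : mpoly.mpoly m R) :
  all [pred mo | mpoly.mdeg mo == dd] (mpoly.msupp p) ->
  exists2 K : R, 0 <= K & forall v : 'rV[R]_m,
    peval p v ^+ 2 <= K * (\sum_(i < m) v 0 i ^+ 2) ^+ dd.
Proof.
move=> homp; pose K0 := \sum_(mo <- mpoly.msupp p) `|mpoly.mcoeff mo p|.
have K00 : 0 <= K0 by apply: sumr_ge0.
exists (K0 ^+ 2) => [|v]; first exact: sqr_ge0.
set S := \sum_(i < m) _.
have S0 : 0 <= S by apply: sumr_ge0 => i _; exact: sqr_ge0.
have vS i : `|v 0 i| <= Num.sqrt S.
  rewrite -sqrtr_sqr ler_sqrt // /S (bigD1 i) //= lerDl.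
  by apply: sumr_ge0 => k _; exact: sqr_ge0.
have := homog_peval_norm_le homp (sqrtr_ge0 S) vS.
rewrite -/K0 -ler_sqr ?nnegrE ?mulr_ge0 ?exprn_ge0 ?sqrtr_ge0 // => le2.
rewrite -real_normK ?num_real // (le_trans le2) //.
by rewrite exprMn -exprM mulnC exprM sqr_sqrtr.
Qed.

Definition linept (R : ringType) (q : nat) (i : 'I_q) (c t : R) : 'rV[R]_q :=
  \row_k (if k == i then t else c).

Lemma monom_linept (R : realType) (q : nat) (alpha : 'I_q -> nat) (i : 'I_q)
    (c t : R) :
  monom alpha (linept i c t) = t ^+ alpha i * \prod_(k | k != i) c ^+ alpha k.
Proof.
rewrite /monom (bigD1 i) //= mxE eqxx; congr (_ * _).
by apply: eq_bigr => k /negbTE ki; rewrite mxE ki.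
Qed.

Lemma near0_linept (R : realType) (q : nat) (i : 'I_q) (P : set 'rV[R]_q) :
  nbhs (0 : 'rV[R]_q) P ->
  exists2 c : R, 0 < c & forall t, `|t| <= c -> P (linept i c t).
Proof.
case/nbhs_ballP => r r0 ballP.
exists (r / 2) => [|t tc]; first by rewrite divr_gt0.
apply: ballP; split => // a k; rewrite -ball_normE /ball_ /= !mxE sub0r normrN.
have c0 : 0 < r / 2 by rewrite divr_gt0.
case: ifP => _; last rewrite gtr0_norm //; lra.
Qed.

Lemma near_value_bounds (T : topologicalType) (R : realFieldType) (g : T -> R)
    (a : T) :
  {for a, continuous g} -> g a != 0 ->
  \forall x \near a,
    [/\ `|g a| / 2 <= `|g x|, `|g x| <= `|g a| * 2 & 0 < g a * g x].
Proof.
move=> /cvg_ballP cg ga0.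
have := cg (`|g a| / 2); rewrite divr_gt0 ?normr_gt0 // => /(_ isT).
apply: filterS => x; rewrite -ball_normE /ball_ /=.
have := ler_norm (g a - g x); have := ler_norm (g x - g a); rewrite distrC.
case: (lerP 0 (g a)) => a0; [rewrite (ger0_norm a0)|rewrite (ltr0_norm a0)];
case: (lerP 0 (g x)) => x0;
  [rewrite (ger0_norm x0)|rewrite (ltr0_norm x0)
  |rewrite (ger0_norm x0)|rewrite (ltr0_norm x0)];
move=> *; split; nra.
Qed.

Section MonomialFactor.
Variables (R : realType) (q : nat) (U : set 'rV[R]_q).
Hypotheses (oU : open U) (U0 : U 0).

Let nbhsU : nbhs (0 : 'rV[R]_q) U.
Proof. exact: open_nbhs_nbhs. Qed.

Lemma monomial_factor_even (f g : 'rV[R]_q -> R) (alpha : 'I_q -> nat) :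
  {for 0, continuous g} -> g 0 != 0 ->
  (forall x, U x -> 0 <= f x) -> (forall x, U x -> f x = monom alpha x * g x) ->
  forall i, ~~ odd (alpha i).
Proof.
move=> cg g0 f_ge0 fE i.
have [c c0 on_line] :=
  near0_linept i (filterI nbhsU (near_value_bounds cg g0)).
pose P := \prod_(k | k != i) c ^+ alpha k.
have P0 : 0 < P by apply: prodr_gt0 => k _; rewrite exprn_gt0.
have f_line t :
    U (linept i c t) ->
    f (linept i c t) = t ^+ alpha i * (P * g (linept i c t)).
  by move=> /fE ->; rewrite monom_linept mulrA.
have c_le : `|c| <= c by rewrite gtr0_norm.
have [Up [_ _ gp]] := on_line c c_le.
rewrite -normrN in c_le.
have [Um [_ _ gm]] := on_line (- c) c_le.
apply: (@even_of_nonneg_pow _ _ c (P * g (linept i c c))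
  (P * g (linept i c (- c)))) => //.
- by rewrite mulrACA mulr_gt0 //; [rewrite mulr_gt0 | nra].
- by rewrite -f_line //; apply: f_ge0.
- by rewrite -f_line //; apply: f_ge0.
Qed.

Lemma monomial_factor_exponent_le (f h gf gh : 'rV[R]_q -> R)
    (alpha beta : 'I_q -> nat) (K : R) (e : nat) :
  {for 0, continuous gf} -> gf 0 != 0 -> {for 0, continuous gh} -> gh 0 != 0 ->
  0 <= K -> (forall x, U x -> f x ^+ 2 <= K * h x ^+ e) ->
  (forall x, U x -> f x = monom alpha x * gf x) ->
  (forall x, U x -> h x = monom beta x * gh x) ->
  forall i, (beta i * e <= 2 * alpha i)%N.
Proof.
move=> cgf gf0 cgh gh0 K0 dom fE hE i.
have [c c0 on_line] := near0_linept i (filterI nbhsU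
  (filterI (near_value_bounds cgf gf0) (near_value_bounds cgh gh0))).
pose Pf := \prod_(k | k != i) c ^+ alpha k.
pose Ph := \prod_(k | k != i) c ^+ beta k.
have Pf0 : 0 < Pf by apply: prodr_gt0 => k _; rewrite exprn_gt0.
have Ph0 : 0 < Ph by apply: prodr_gt0 => k _; rewrite exprn_gt0.
apply: (@leq_of_pow_dominated _ _ _ ((Pf * (`|gf 0| / 2)) ^+ 2)
  (K * (Ph * (`|gh 0| * 2)) ^+ e) c) => // [|t /andP [t0 tc]].
  by rewrite exprn_gt0 // mulr_gt0 // divr_gt0 ?normr_gt0.
have t_le : `|t| <= c by rewrite gtr0_norm.
have [Ux [[gf_lb _ _] [_ gh_ub _]]] := on_line t t_le.
have ta0 : 0 <= t ^+ alpha i by rewrite exprn_ge0 // ltW.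
have tb0 : 0 <= t ^+ beta i by rewrite exprn_ge0 // ltW.
have f_lb : t ^+ alpha i * Pf * (`|gf 0| / 2) <= `|f (linept i c t)|.
  rewrite fE // monom_linept !normrM (ger0_norm ta0) (gtr0_norm Pf0).
  by rewrite ler_wpM2l // mulr_ge0 // ltW.
have h_ub : `|h (linept i c t)| <= t ^+ beta i * Ph * (`|gh 0| * 2).
  rewrite hE // monom_linept !normrM (ger0_norm tb0) (gtr0_norm Ph0).
  by rewrite ler_wpM2l // mulr_ge0 // ltW.
apply: le_trans (le_trans _ (dom _ Ux)) _.
  have -> : (Pf * (`|gf 0| / 2)) ^+ 2 * t ^+ (2 * alpha i) =
            (t ^+ alpha i * Pf * (`|gf 0| / 2)) ^+ 2.
    by rewrite mulnC exprM; ring.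
  rewrite -[f _ ^+ 2]real_normK ?num_real // lerXn2r // nnegrE.
  by rewrite !mulr_ge0 ?divr_ge0 // ltW.
have -> : K * (Ph * (`|gh 0| * 2)) ^+ e * t ^+ (beta i * e) =
          K * (t ^+ beta i * Ph * (`|gh 0| * 2)) ^+ e.
  by rewrite exprM -mulrA -!exprMn; congr (_ * _ ^+ _); ring.
rewrite ler_wpM2l //; apply: le_trans (ler_norm _) _.
rewrite normrX lerXn2r // nnegrE.
by rewrite !mulr_ge0 // ltW.
Qed.

End MonomialFactor.

Theorem lemma5p3 (R : realType) (m n : nat) (G : set 'M[R]_m)
  (sigma : 'I_n -> mpoly.mpoly m R) (d : 'I_n -> nat) (n0 : (0 < n)%N)
  (C : Cfamily R) (q : nat) (U : set 'rV[R]_q) (f : 'I_n -> 'rV[R]_q -> R)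
  (alpha : 'I_n -> 'I_q -> nat) :
  compact_orth_group G ->
  (forall v : 'rV[R]_m, (forall A, G A -> v *m A = v) -> v = 0) ->
  hom_generators G sigma d ->
  (forall j, (0 < d j)%N) ->
  (forall v : 'rV[R]_m, peval (sigma (Ordinal n0)) v = \sum_(i < m) v 0 i ^+ 2) ->
  is_C_class C ->
  open U -> U 0 ->
  (forall j, C q U (f j)) ->
  (forall x, U x -> exists v : 'rV[R]_m, forall j, f j x = peval (sigma j) v) ->
  (exists x, U x /\ f (Ordinal n0) x != 0) ->
  (forall j, (exists x, U x /\ f j x != 0) ->
     exists gj : 'rV[R]_q -> R,
       [/\ C q U gj, (forall x, U x -> gj x != 0) &
           (forall x, U x -> f j x = monom (alpha j) x * gj x)]) ->
  exists delta : 'I_q -> nat,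
    (forall i, alpha (Ordinal n0) i = 2 * delta i)%N /\
    (forall j, (exists x, U x /\ f j x != 0) ->
       forall i, (d j * delta i <= alpha j i)%N).
Proof.
move=> _ _ [_ homog _] _ sigma1E [_ [C_smooth _]] oU U0 _ f_sigma f1_nz fE.
set j1 := Ordinal n0.
have C_cont0 g : C q U g -> {for 0, continuous g}.
  by move=> Cg; have [_] := C_smooth q U g oU Cg [::] 0 U0.
have [g1 [Cg1 g1_nz f1E]] := fE j1 f1_nz.
have f1_ge0 x : U x -> 0 <= f j1 x.
  move=> /f_sigma [v ->]; rewrite sigma1E.
  by apply: sumr_ge0 => k _; exact: sqr_ge0.
have alpha1_even :=
  monomial_factor_even oU U0 (C_cont0 _ Cg1) (g1_nz 0 U0) f1_ge0 f1E.
have alpha1E i : alpha j1 i = (2 * (alpha j1 i)./2)%N.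
  by rewrite mul2n even_halfK.
exists (fun i => (alpha j1 i)./2); split=> // j fj_nz i.
have [gj [Cgj gj_nz fjE]] := fE j fj_nz.
have [K K0 sigmaj_le] := homog_peval_sqr_le (homog j).
have fj_le x : U x -> f j x ^+ 2 <= K * f j1 x ^+ d j.
  by move=> /f_sigma [v fv]; rewrite !fv sigma1E; apply: sigmaj_le.
have := monomial_factor_exponent_le oU U0 (C_cont0 _ Cgj) (gj_nz 0 U0)
  (C_cont0 _ Cg1) (g1_nz 0 U0) K0 fj_le fjE f1E i.
by rewrite {1}alpha1E -mulnA leq_pmul2l // mulnC.
Qed.
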